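(* Let $Q$ be a quadrangulation with a strong labeling. Walking along the boundary of any bounded face of $Q$ in clockwise order, the labels of consecutive angles change precisely when moving from a black vertex to a white vertex.
   Context: A quadrangulation is a simple plane graph with at least four vertices all of whose faces (including the outer face) are bounded by $4$-cycles; it is bipartite, and its vertices are properly colored black and white. An angle is an incidence of a vertex with a face (a corner of a face at a vertex). A strong labeling of $Q$ is a map from the angles of $Q$ to $\{0,1\}$ such that: (G0) the two black vertices on the outer face are named $s_0$ and $s_1$, and all angles at $s_i$ are labeled $i$; (G1) for each vertex $v\notin\{s_0,s_1\}$ the labels around $v$ form one non-empty cyclic interval of $1$s and one non-empty cyclic interval of $0$s; (G2) for each edge, the two labels on the two sides of the edge coincide at one endpoint and differ at the other; (G3) the labels in each bounded face, read cyclically, are $0,0,1,1$, and reading the labels of the outer face in clockwise order starting at $s_0$ they are $0,0,1,1$. *)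

(* Plane graphs are encoded as combinatorial maps (rotation
   systems) of genus 0. *)
From mathcomp Require Import all_boot fingroup perm.
Set Implicit Arguments.
Unset Strict Implicit.
Unset Printing Implicit Defensive.

Section QuadDefs.
Variables (D V : finType).
(* D : darts (half-edges); V : vertices.
   alpha : the edge involution (reverses a dart).
   sigma : successor of a dart in CLOCKWISE order around its tail vertex
           (the plane embedding).
   tail  : the vertex a dart starts from.
   The angle (corner) represented by dart d is the angular sector at tail d
   swept clockwise from d to sigma d. *)
Variables (alpha sigma : {perm D}) (tail : D -> V).

(* next angle along a face, keeping the face on the LEFT; for bounded faces
   this is counterclockwise, for the outer face it is clockwise in the plane *)
Definition face_ccw (d : D) : D := alpha (sigma d).
(* next angle along a face, keeping the face on the RIGHT; for bounded faces
   this is the clockwise traversal in the plane *)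
Definition face_cw (d : D) : D := (sigma^-1)%g (alpha d).

Definition plane_map : Prop :=
  [/\ (forall d, alpha (alpha d) = d) /\ (forall d, alpha d != d),
      forall d d', (tail d == tail d') = fconnect sigma d d',
      forall v, exists d, tail d = v,
      forall d d', connect (fun x y => (y == sigma x) || (y == alpha x)) d d'
    & (* Euler's formula: #V - #E + #F = 2 *)
      #|V| + fcard face_ccw D = #|D| %/ 2 + 2 ].

Definition simple_map : Prop :=
  (forall d, tail (alpha d) != tail d) /\
  (forall d d', tail d = tail d' -> tail (alpha d) = tail (alpha d') -> d = d').

Definition same_face (d d' : D) : bool := fconnect face_ccw d d'.

(* quadrangulation with outer face the face containing the angle o *)
Definition quadrangulation (o : D) : Prop :=
  [/\ plane_map, simple_map, 4 <= #|V| &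
      forall d, size (fingraph.orbit face_ccw d) = 4 /\ uniq (map tail (fingraph.orbit face_ccw d))].

(* proper black (true) / white (false) colouring *)
Definition proper_coloring (black : V -> bool) : Prop :=
  forall d, black (tail (alpha d)) != black (tail d).

(* strong labeling lab : angles -> {0,1} (false = 0, true = 1) *)
Definition strong_labeling (o : D) (black : V -> bool) (s0 s1 : V)
    (lab : D -> bool) : Prop :=
  [/\
      [/\ [&& s0 != s1, black s0 & black s1],
          exists2 d, same_face o d & tail d = s0,
          exists2 d, same_face o d & tail d = s1,
          forall d, tail d = s0 -> lab d = false &
          forall d, tail d = s1 -> lab d = true],
      (* G1: around v the labels form one nonempty cyclic interval of 1s
         followed by one nonempty cyclic interval of 0s *)
      (forall v, v != s0 -> v != s1 ->
         exists d, [/\ tail d = v &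
           exists k, [/\ 0 < k, k < fingraph.order sigma d &
             forall i, i < fingraph.order sigma d -> lab (iter i sigma d) = (i < k)]]),
      (* G2: the angles on the two sides of the edge {d, alpha d} at tail d are
         sigma^-1 d and d; they coincide at exactly one endpoint *)
      (forall d, (lab ((sigma^-1)%g d) == lab d)
                 != (lab ((sigma^-1)%g (alpha d)) == lab (alpha d))),
      (forall d, ~~ same_face o d ->
         exists i, [/\ i < 4, lab (iter i face_cw d) = false,
                   lab (iter i.+1 face_cw d) = false,
                   lab (iter i.+2 face_cw d) = true &
                   lab (iter i.+3 face_cw d) = true]) &
      (* G3, outer face: clockwise (in the plane) from s0: 0,0,1,1 *)
      (exists2 c, same_face o c & [/\ tail c = s0,
          lab c = false, lab (face_ccw c) = false,
          lab (iter 2 face_ccw c) = true & lab (iter 3 face_ccw c) = true])].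

End QuadDefs.

(* Say the label flips at an angle d when it differs from the label of the
   next angle clockwise along the face of d.  The property "d flips iff tail d
   is black" is preserved by reversing the edge (this is G2, as the endpoints
   have different colours) and by stepping along a face (in a 4-face labelled
   0,0,1,1 opposite angles have different labels, and colours alternate).
   These moves generate the rotation around a vertex, so by connectivity the
   property spreads from the outer angle at s0, where it holds by G0 and G3. *)
From mathcomp Require Import all_boot fingroup perm zify.

Set Implicit Arguments.
Unset Strict Implicit.
Unset Printing Implicit Defensive.

Lemma window0011_antiperiodic (f : nat -> bool) i :
    (forall j, f j.+4 = f j) ->
    f i = false -> f i.+1 = false -> f i.+2 = true -> f i.+3 = true ->
  forall j, f j.+2 = ~~ f j.
Proof.
move=> per f0 f1 f2 f3.
have perM k j : f (j + k * 4) = f j.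
  by elim: k => [|k IHk]; rewrite ?addn0 // mulSnr addnA addn4 per.
have from_i m : f (i + m).+2 = ~~ f (i + m).
  rewrite (divn_eq m 4).
  have -> : i + (m %/ 4 * 4 + m %% 4) = i + m %% 4 + m %/ 4 * 4 by lia.
  rewrite -!addSn !perM.
  have : m %% 4 < 4 by rewrite ltn_pmod.
  case: (m %% 4) => [|[|[|[|r]]]] // _;
    by rewrite ?addnS !addn0 ?per ?f0 ?f1 ?f2 ?f3.
move=> j; rewrite -(perM i j) -(perM i j.+2).
have -> : j.+2 + i * 4 = (i + (j + i * 3)).+2 by lia.
have -> : j + i * 4 = i + (j + i * 3) by lia.
exact: from_i.
Qed.

Section FaceWalk.

Variables (D : finType) (alpha sigma : {perm D}).
Hypothesis alphaK : involutive alpha.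

Local Notation face_cw := (face_cw alpha sigma).
Local Notation face_ccw := (face_ccw alpha sigma).

Lemma face_cwK : cancel face_cw face_ccw.
Proof. by move=> x; rewrite /face_ccw /face_cw permKV alphaK. Qed.

Lemma face_ccwK : cancel face_ccw face_cw.
Proof. by move=> x; rewrite /face_ccw /face_cw alphaK permK. Qed.

Lemma face_ccw_inj : injective face_ccw.
Proof. exact: can_inj face_ccwK. Qed.

Hypothesis face_ccw4 : forall x, iter 4 face_ccw x = x.

Lemma face_cw4 x : iter 4 face_cw x = x.
Proof. by rewrite -{1}(face_ccw4 (iter 4 face_cw x)) /= !face_cwK. Qed.

Lemma iter2_face_cw x : iter 2 face_cw x = iter 2 face_ccw x.
Proof. by rewrite -{1}(face_ccw4 x) /= !face_ccwK. Qed.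

End FaceWalk.

Section FlipsAtBlack.

Variables (D V : finType) (alpha sigma : {perm D}) (tail : D -> V).
Variables (black : V -> bool) (lab : D -> bool).
Hypothesis alphaK : involutive alpha.
Hypothesis tail_sigma : forall x, tail (sigma x) = tail x.
Hypothesis black_alpha : forall x, black (tail (alpha x)) = ~~ black (tail x).

Local Notation face_cw := (face_cw alpha sigma).
Local Notation face_ccw := (face_ccw alpha sigma).

Lemma tail_sigmaV x : tail ((sigma^-1)%g x) = tail x.
Proof. by rewrite -{2}(permKV sigma x) tail_sigma. Qed.

Lemma black_face_cw x : black (tail (face_cw x)) = ~~ black (tail x).
Proof. by rewrite /face_cw tail_sigmaV black_alpha. Qed.

Definition flips_at_black x := (lab (face_cw x) != lab x) == black (tail x).

Hypothesis edge_rule : forall x, (lab ((sigma^-1)%g x) == lab x)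
  != (lab ((sigma^-1)%g (alpha x)) == lab (alpha x)).

Lemma flips_at_black_alpha x : flips_at_black (alpha x) = flips_at_black x.
Proof.
rewrite /flips_at_black /face_cw alphaK black_alpha; move: (edge_rule x).
case: (lab _); case: (lab _); case: (lab _); case: (lab _); by case: black.
Qed.

Hypothesis face_antipodal : forall x, lab (iter 2 face_cw x) = ~~ lab x.

Lemma flips_at_black_face_cw x : flips_at_black (face_cw x) = flips_at_black x.
Proof.
rewrite /flips_at_black black_face_cw [lab (face_cw _)](face_antipodal x).
by case: (lab _); case: (lab _); case: black.
Qed.

Lemma flips_at_black_sigma x : flips_at_black (sigma x) = flips_at_black x.
Proof.
have -> : sigma x = alpha (face_ccw x) by rewrite /face_ccw alphaK.
by rewrite flips_at_black_alpha -{2}(face_ccwK sigma alphaK x) flips_at_black_face_cw.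
Qed.

Hypothesis connected :
  forall x y, connect (fun x y => (y == sigma x) || (y == alpha x)) x y.

Lemma flips_at_black_all c x : flips_at_black c -> flips_at_black x.
Proof.
have closed_flips : closed (fun x y => (y == sigma x) || (y == alpha x))
                           [pred x | flips_at_black x].
  move=> u v /orP[] /eqP ->; by rewrite !inE ?flips_at_black_sigma ?flips_at_black_alpha.
by move=> flips_c; have := closed_connect closed_flips (connected c x); rewrite !inE flips_c.
Qed.

Lemma label_flip_face_cw c x : flips_at_black c ->
  (lab (face_cw x) != lab x) = black (tail x) && ~~ black (tail (face_cw x)).
Proof.
by move=> /(flips_at_black_all x) /eqP ->; rewrite black_face_cw negbK andbb.
Qed.

End FlipsAtBlack.

Section Quadrangulation.

Variables (D V : finType) (alpha sigma : {perm D}) (tail : D -> V) (o : D).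

Local Notation face_cw := (face_cw alpha sigma).
Local Notation face_ccw := (face_ccw alpha sigma).

Lemma plane_map_tail_sigma :
  plane_map alpha sigma tail -> forall x, tail (sigma x) = tail x.
Proof.
by move=> [_ tailE _ _ _] x; apply/esym/eqP; rewrite tailE fconnect1.
Qed.

Lemma quadrangulation_face_ccw4 :
  quadrangulation alpha sigma tail o -> forall x, iter 4 face_ccw x = x.
Proof.
move=> [[[alphaK _] _ _ _ _] _ _ face4] x.
have [size4 _] := face4 x; rewrite size_orbit in size4.
by rewrite -{1}size4 (iter_order (face_ccw_inj alphaK)).
Qed.

Lemma proper_coloring_alpha (black : V -> bool) :
    proper_coloring alpha tail black ->
  forall x, black (tail (alpha x)) = ~~ black (tail x).
Proof. by move=> col x; have := col x; case: (black _); case: (black _). Qed.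

Lemma strong_labeling_face_antipodal black s0 s1 lab :
    quadrangulation alpha sigma tail o ->
    strong_labeling alpha sigma tail o black s0 s1 lab ->
  forall x, lab (iter 2 face_cw x) = ~~ lab x.
Proof.
move=> quad [_ _ _ bounded [c oc [_ lab0 lab1 lab2 lab3]]] x.
have [[[alphaK _] _ _ _ _] _ _ _] := quad.
have face_ccw4 := quadrangulation_face_ccw4 quad.
have [ox | /bounded[i [_ w0 w1 w2 w3]]] := boolP (same_face alpha sigma o x).
  have cx : fconnect face_ccw c x.
    by apply: connect_trans ox; rewrite (fconnect_sym (face_ccw_inj alphaK)).
  rewrite iter2_face_cw // -(iter_findex cx) -iterD add2n.
  apply: (@window0011_antiperiodic (fun m => lab (iter m face_ccw c)) 0) => //.
  by move=> j; rewrite -addn4 iterD face_ccw4.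
apply: (@window0011_antiperiodic (fun m => lab (iter m face_cw x)) i _ w0 w1 w2 w3 0).
by move=> j; rewrite -addn4 iterD face_cw4.
Qed.

End Quadrangulation.

Theorem lemma9 (D V : finType) (alpha sigma : {perm D}) (tail : D -> V)
    (o : D) (black : V -> bool) (s0 s1 : V) (lab : D -> bool) :
  quadrangulation alpha sigma tail o ->
  proper_coloring alpha tail black ->
  strong_labeling alpha sigma tail o black s0 s1 lab ->
  forall d, ~~ same_face alpha sigma o d ->
    (lab (face_cw alpha sigma d) != lab d)
      = black (tail d) && ~~ black (tail (face_cw alpha sigma d)).
Proof.
move=> quad col labeling d _.
have [plane _ _ _] := quad; have [[alphaK _] _ _ connected _] := plane.
have [[/and3P[_ black_s0 _] _ _ _ _] _ edge_rule _ [c _ [tail_c lab_c _ _ lab3_c]]]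
  := labeling.
apply: (label_flip_face_cw alphaK (plane_map_tail_sigma plane)
  (proper_coloring_alpha col) edge_rule
  (strong_labeling_face_antipodal quad labeling) connected (c := c) d).
rewrite /flips_at_black.
have -> : face_cw alpha sigma c = iter 3 (face_ccw alpha sigma) c.
  by rewrite -{1}(quadrangulation_face_ccw4 quad c) /= face_ccwK.
by rewrite lab3_c lab_c tail_c black_s0.
Qed.
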